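(* Let $B$ be a finite skew brace and $X$ a sub-q-cycle set of $B$. Then the subgroup of $(B,+)$ generated by $X$ equals the subgroup of $(B,\circ)$ generated by $X$.
   Context: A skew brace is a triple $(B,+,\circ)$ where $(B,+)$ and $(B,\circ)$ are groups and $a\circ(b+c)=a\circ b-a+a\circ c$; $-a$, $a^-$ are additive and multiplicative inverses, $\lambda_a(b):=-a+a\circ b$, $\delta_a(b):=a\circ b-a$. $B$ is a q-cycle set via $a\cdot b:=\lambda_{a^-}(b)$, $a:b:=\delta_{a^-}(b)$. A q-cycle set is a non-empty set with operations $\cdot,:$ such that each $y\mapsto x\cdot y$ is bijective and $(x\cdot y)\cdot(x\cdot z)=(y:x)\cdot(y\cdot z)$, $(x:y):(x:z)=(y\cdot x):(y:z)$, $(x\cdot y):(x\cdot z)=(y:x)\cdot(y:z)$; a sub-q-cycle set is a subset that is a q-cycle set under the restricted operations. *)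

From mathcomp Require Import all_boot.
Set Implicit Arguments. Unset Strict Implicit. Unset Printing Implicit Defensive.

Definition is_group (T : Type) (op : T -> T -> T) (e : T) (inv : T -> T) : Prop :=
  [/\ associative op, left_id e op, right_id e op,
      left_inverse e inv op & right_inverse e inv op].

Record skew_brace (T : Type) := SkewBrace {
  sb_add : T -> T -> T;
  sb_zero : T;
  sb_opp : T -> T;
  sb_mul : T -> T -> T;
  sb_one : T;
  sb_inv : T -> T;
  sb_add_group : is_group sb_add sb_zero sb_opp;
  sb_mul_group : is_group sb_mul sb_one sb_inv;
  sb_compat : forall a b c,
    sb_mul a (sb_add b c) = sb_add (sb_add (sb_mul a b) (sb_opp a)) (sb_mul a c)
}.

Section SkewBraceOps.
Variables (T : Type) (B : skew_brace T).
Local Notation "a + b" := (sb_add B a b).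
Local Notation "- a" := (sb_opp B a).
Local Notation "a 'o' b" := (sb_mul B a b) (at level 40, left associativity).

Definition sb_lambda (a b : T) : T := - a + (a o b).
Definition sb_delta (a b : T) : T := (a o b) + - a.

Definition qdot (a b : T) : T := sb_lambda (sb_inv B a) b.
Definition qcolon (a b : T) : T := sb_delta (sb_inv B a) b.
End SkewBraceOps.

Section Sub.
Variables (T : finType) (B : skew_brace T).
Local Notation dot := (qdot B).
Local Notation col := (qcolon B).

Definition is_sub_qcycle_set (X : {set T}) : Prop :=
  X != set0 /\ [/\
      (forall x y, x \in X -> y \in X -> dot x y \in X /\ col x y \in X),
      (forall x, x \in X -> forall z, z \in X ->
          exists! y, y \in X /\ dot x y = z),
      (forall x y z, x \in X -> y \in X -> z \in X ->
          dot (dot x y) (dot x z) = dot (col y x) (dot y z)),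
      (forall x y z, x \in X -> y \in X -> z \in X ->
          col (col x y) (col x z) = col (dot y x) (col y z)) &
      (forall x y z, x \in X -> y \in X -> z \in X ->
          col (dot x y) (dot x z) = dot (col y x) (col y z))].

Definition is_subgroupb (op : T -> T -> T) (e : T) (inv : T -> T) (H : {set T}) : bool :=
  [&& e \in H, [forall a in H, forall b in H, op a b \in H]
    & [forall a in H, inv a \in H]].

Definition gen_subgroup (op : T -> T -> T) (e : T) (inv : T -> T) (X : {set T}) : {set T} :=
  [set x | [forall H : {set T}, (is_subgroupb op e inv H && (X \subset H)) ==> (x \in H)]].

Definition add_gen (X : {set T}) := gen_subgroup (sb_add B) (sb_zero B) (sb_opp B) X.
Definition mul_gen (X : {set T}) := gen_subgroup (sb_mul B) (sb_one B) (sb_inv B) X.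
End Sub.

From mathcomp Require Import all_boot.
Set Implicit Arguments. Unset Strict Implicit. Unset Printing Implicit Defensive.

(* Let M and A be the subgroups of (B,o) and (B,+) generated by X.  Since B is
   finite, a set containing the identity and closed under left multiplication
   by elements of X contains the generated subgroup, so it suffices to show
   that M is stable under [y + _] and A under [y o _] for y in X.  Both follow
   from [y o b = y + lambda_y b] and [y + b = y o lambda_{y^-} b], once we know
   that M and A are stable under lambda_w for every w with lambda_w(X) <= X.
   For A this is additivity of lambda_w; for M it follows by induction from
   lambda_w (x o m) = x' o lambda_{x'^- o w o x} m, where x' = lambda_w x.
   The q-cycle set axioms only enter through x^- and x having this property
   for x in X. *)

Section Group.
Variables (T : Type) (op : T -> T -> T) (e : T) (inv : T -> T).
Hypothesis G : is_group op e inv.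

Lemma grp_mulI a : injective (op a).
Proof.
have [opA op1x _ opVx _] := G; move=> x y E.
by rewrite -(op1x x) -(opVx a) -opA E opA opVx op1x.
Qed.

Lemma grp_invE a b : op a b = e -> inv a = b.
Proof.
have [_ _ _ _ opxV] := G; move=> E.
by apply: (@grp_mulI a); rewrite opxV E.
Qed.

End Group.

Section GeneratedSubgroup.
Variables (T : finType) (op : T -> T -> T) (e : T) (inv : T -> T).
Implicit Types (S X : {set T}).

Lemma gen_subgroupP X x :
  reflect (forall H, is_subgroupb op e inv H -> X \subset H -> x \in H)
          (x \in gen_subgroup op e inv X).
Proof.
rewrite inE; apply: (iffP forallP) => [genx H sgH sXH | genx H].
  by have /implyP := genx H; apply; rewrite sgH.
by apply/implyP => /andP[]; apply: genx.
Qed.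

Lemma subgroupb1 H : is_subgroupb op e inv H -> e \in H.
Proof. by case/and3P. Qed.

Lemma subgroupbM H a b :
  is_subgroupb op e inv H -> a \in H -> b \in H -> op a b \in H.
Proof. by case/and3P=> _ /forall_inP cH _ aH; move/forall_inP: (cH a aH); apply. Qed.

Lemma sub_gen_subgroup X : X \subset gen_subgroup op e inv X.
Proof. by apply/subsetP=> x Xx; apply/gen_subgroupP=> H _ /subsetP; apply. Qed.

Lemma gen_subgroup1 X : e \in gen_subgroup op e inv X.
Proof. by apply/gen_subgroupP=> H /subgroupb1. Qed.

Lemma gen_subgroupM X a b :
  a \in gen_subgroup op e inv X -> b \in gen_subgroup op e inv X ->
  op a b \in gen_subgroup op e inv X.
Proof.
move=> /gen_subgroupP genA /gen_subgroupP genB.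
by apply/gen_subgroupP=> H sgH sXH; apply: subgroupbM (genA _ _ _) (genB _ _ _).
Qed.

Hypothesis G : is_group op e inv.

(* In a finite group, left multiplication by a permutes a closed set S,
   so e = op a b for some b in S, and b = inv a. *)
Lemma subgroupb_mul_closed S :
  e \in S -> {in S &, forall a b, op a b \in S} -> is_subgroupb op e inv S.
Proof.
move=> Se closedS; apply/and3P; split=> //.
  by apply/forall_inP=> a Sa; apply/forall_inP=> b Sb; apply: closedS.
apply/forall_inP=> a Sa.
have sub_aS : op a @: S \subset S.
  by apply/subsetP=> _ /imsetP[b Sb ->]; apply: closedS.
have aS_eq : op a @: S = S.
  apply/eqP; rewrite eqEcard sub_aS card_in_imset ?leqnn // => b c _ _.
  exact: (grp_mulI G).
have : e \in op a @: S by rewrite aS_eq.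
by case/imsetP=> b Sb /esym/(grp_invE G) ->.
Qed.

Lemma gen_subgroup_ind X S :
  e \in S -> (forall y s, y \in X -> s \in S -> op y s \in S) ->
  gen_subgroup op e inv X \subset S.
Proof.
have [opA op1x opx1 _ _] := G; move=> Se stepS.
pose R := [set s | [forall t in S, op s t \in S]].
have sgR : is_subgroupb op e inv R.
  apply: subgroupb_mul_closed=> [|a b].
    by rewrite inE; apply/forall_inP=> t; rewrite op1x.
  rewrite !inE=> /forall_inP Ra /forall_inP Rb; apply/forall_inP=> t St.
  by rewrite -opA; apply/Ra/Rb.
have sXR : X \subset R.
  by apply/subsetP=> y Xy; rewrite inE; apply/forall_inP=> t; apply: stepS.
apply/subsetP=> s /gen_subgroupP/(_ R sgR sXR).
by rewrite inE=> /forall_inP/(_ e Se); rewrite opx1.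
Qed.

End GeneratedSubgroup.

Section SkewBraceLambda.
Variables (T : Type) (B : skew_brace T).
Local Notation "a + b" := (sb_add B a b).
Local Notation "- a" := (sb_opp B a).
Local Notation "a 'o' b" := (sb_mul B a b) (at level 40, left associativity).
Local Notation lam := (sb_lambda B).

Let addA : associative (sb_add B). Proof. by case: (sb_add_group B). Qed.
Let add0r : left_id (sb_zero B) (sb_add B). Proof. by case: (sb_add_group B). Qed.
Let addr0 : right_id (sb_zero B) (sb_add B). Proof. by case: (sb_add_group B). Qed.
Let addNr : left_inverse (sb_zero B) (sb_opp B) (sb_add B).
Proof. by case: (sb_add_group B). Qed.
Let addrN : right_inverse (sb_zero B) (sb_opp B) (sb_add B).
Proof. by case: (sb_add_group B). Qed.

Lemma sb_mulE a b : a o b = a + lam a b.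
Proof. by rewrite /sb_lambda addA addrN add0r. Qed.

Lemma sb_lambdaD a b c : lam a (b + c) = lam a b + lam a c.
Proof. by rewrite /sb_lambda sb_compat !addA. Qed.

Lemma sb_lambda0 a : lam a (sb_zero B) = sb_zero B.
Proof.
apply: (grp_mulI (sb_add_group B) (a := lam a (sb_zero B))).
by rewrite -sb_lambdaD !addr0.
Qed.

Lemma sb_one_zero : sb_one B = sb_zero B.
Proof.
have [_ mul1r _ _ _] := sb_mul_group B.
have := congr1 (sb_add B (sb_one B)) (sb_lambda0 (sb_one B)).
by rewrite -sb_mulE mul1r addr0.
Qed.

Lemma sb_lambda1 b : lam (sb_one B) b = b.
Proof.
have [_ mul1r _ _ _] := sb_mul_group B.
have opp0 : - sb_zero B = sb_zero B by apply: (grp_invE (sb_add_group B)).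
by rewrite /sb_lambda mul1r sb_one_zero opp0.
Qed.

Lemma sb_lambdaM a b c : lam (a o b) c = lam a (lam b c).
Proof.
have [mulA _ _ _ _] := sb_mul_group B.
by rewrite {1}/sb_lambda -mulA [b o c]sb_mulE sb_compat !addA addNr add0r.
Qed.

Lemma sb_lambdaK a b : lam a (lam (sb_inv B a) b) = b.
Proof. by have [_ _ _ _ mulrV] := sb_mul_group B; rewrite -sb_lambdaM mulrV sb_lambda1. Qed.

Lemma sb_addE a b : a + b = a o lam (sb_inv B a) b.
Proof. by rewrite sb_mulE sb_lambdaK. Qed.

End SkewBraceLambda.

Section SubQCycleSet.
Variables (T : finType) (B : skew_brace T) (X : {set T}).
Hypothesis qX : is_sub_qcycle_set B X.
Local Notation lam := (sb_lambda B).
Local Notation M := (mul_gen B X).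
Local Notation A := (add_gen B X).

Definition lambda_stab : {set T} := [set w | [forall x in X, lam w x \in X]].

Lemma lambda_stabP w : reflect {in X, forall x, lam w x \in X} (w \in lambda_stab).
Proof. by rewrite inE; apply: forall_inP. Qed.

Lemma lambda_stabM v w :
  v \in lambda_stab -> w \in lambda_stab -> sb_mul B v w \in lambda_stab.
Proof.
move=> /lambda_stabP stab_v /lambda_stabP stab_w.
by apply/lambda_stabP=> x Xx; rewrite sb_lambdaM; apply/stab_v/stab_w.
Qed.

Lemma lambda_stabV x : x \in X -> sb_inv B x \in lambda_stab.
Proof. by case: qX=> _ [closedX _ _ _ _] Xx; apply/lambda_stabP=> y /(closedX x y Xx)[]. Qed.

Lemma lambda_stabX x : x \in X -> x \in lambda_stab.
Proof.
case: qX=> _ [_ ontoX _ _ _] Xx; apply/lambda_stabP=> z Xz.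
by have [y [[Xy <-] _]] := ontoX x Xx z Xz; rewrite /qdot sb_lambdaK.
Qed.

Lemma add_gen_ind (S : {set T}) :
  sb_zero B \in S -> (forall y s, y \in X -> s \in S -> sb_add B y s \in S) ->
  A \subset S.
Proof. exact: (@gen_subgroup_ind _ _ _ _ (sb_add_group B) X S). Qed.

Lemma mul_gen_ind (S : {set T}) :
  sb_one B \in S -> (forall y s, y \in X -> s \in S -> sb_mul B y s \in S) ->
  M \subset S.
Proof. exact: (@gen_subgroup_ind _ _ _ _ (sb_mul_group B) X S). Qed.

Lemma mem_add_gen x : x \in X -> x \in A.
Proof. exact: subsetP (sub_gen_subgroup _ _ _ _) x. Qed.

Lemma mem_mul_gen x : x \in X -> x \in M.
Proof. exact: subsetP (sub_gen_subgroup _ _ _ _) x. Qed.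

Lemma lambda_add_gen w a : w \in lambda_stab -> a \in A -> lam w a \in A.
Proof.
move=> /lambda_stabP stab_w Aa.
suff /subsetP/(_ a Aa) : A \subset [set a | lam w a \in A] by rewrite inE.
apply: add_gen_ind => [|y a' Xy]; first by rewrite inE sb_lambda0 gen_subgroup1.
rewrite inE=> Aa'; rewrite inE sb_lambdaD; apply: gen_subgroupM Aa'.
exact/mem_add_gen/stab_w.
Qed.

Lemma lambda_mul_gen w m : w \in lambda_stab -> m \in M -> lam w m \in M.
Proof.
move=> stab_w Mm.
suff /subsetP/(_ m Mm) : M \subset [set m | [forall v in lambda_stab, lam v m \in M]].
  by rewrite inE=> /forall_inP; apply.
apply: mul_gen_ind => [|x m' Xx].
  rewrite inE; apply/forall_inP=> v _.
  by rewrite sb_one_zero sb_lambda0 -sb_one_zero gen_subgroup1.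
rewrite inE=> /forall_inP IH; rewrite inE; apply/forall_inP=> v stab_v.
set x' := lam v x; have Xx' : x' \in X by move/lambda_stabP: stab_v; apply.
have stab_v' : sb_mul B (sb_inv B x') (sb_mul B v x) \in lambda_stab.
  exact: lambda_stabM (lambda_stabV Xx') (lambda_stabM stab_v (lambda_stabX Xx)).
rewrite sb_mulE sb_lambdaD -sb_lambdaM sb_addE -sb_lambdaM.
exact: gen_subgroupM (mem_mul_gen Xx') (IH _ stab_v').
Qed.

Lemma add_gen_sub_mul_gen : A \subset M.
Proof.
apply: add_gen_ind => [|y s Xy Ms]; first by rewrite -sb_one_zero gen_subgroup1.
rewrite sb_addE; apply: gen_subgroupM (lambda_mul_gen (lambda_stabV Xy) Ms).
exact: mem_mul_gen.
Qed.

Lemma mul_gen_sub_add_gen : M \subset A.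
Proof.
apply: mul_gen_ind => [|y s Xy As]; first by rewrite sb_one_zero gen_subgroup1.
rewrite sb_mulE; apply: gen_subgroupM (lambda_add_gen (lambda_stabX Xy) As).
exact: mem_add_gen.
Qed.

End SubQCycleSet.

Theorem mainTheorem18 (T : finType) (B : skew_brace T) (X : {set T}) :
  is_sub_qcycle_set B X -> add_gen B X = mul_gen B X.
Proof.
move=> qX; apply/eqP; rewrite eqEsubset.
by rewrite add_gen_sub_mul_gen // mul_gen_sub_add_gen.
Qed.
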